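(* Let $m\in[1/2,1)$ and let $g_s:\mathbb{T}\to\mathbb{T}$ be as in the context. Then for every $s\in J_\Gamma:=\left[\frac{1}{-2+1/(m-m^2)},\,\frac12\right]$, the map $g_s$ has a fixed point.
   Context: Let $\mathbb{T}=\mathbb{R}/\mathbb{Z}\cong[0,1)$, $m\in[1/2,1)$ and $\Lambda=m/(1-m)$. Define $h:\mathbb{T}\to\mathbb{T}$ by $h(y)=1-m+\Lambda y$ for $y\in[0,1-m]$ and $h(y)=\Lambda^{-1}(y-(1-m))$ for $y\in[1-m,1)$, and for $s\in\mathbb{R}$ let $g_s(x)=h(x+s \bmod 1)$. Equivalently, $g_s$ is the first-return map to the bottom side of the unit square of the upward linear flow in direction $(s,1)$ on the dilation surface obtained from the unit square by identifying its vertical sides by translation, gluing the top segment $[0,1-m]\times\{1\}$ to the bottom segment $[1-m,1]\times\{0\}$ via $(y,1)\mapsto(1-m+\Lambda y,0)$, and gluing $[1-m,1]\times\{1\}$ to $[0,1-m]\times\{0\}$ via $(y,1)\mapsto(\Lambda^{-1}(y-1+m),0)$. *)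

From Stdlib Require Import Reals.
Open Scope R_scope.

(* floor and fractional part: Stdlib's [up x] is the unique integer with
   x < up x <= x + 1, so floor x = up x - 1. *)
Definition floorR (x : R) : Z := (up x - 1)%Z.
Definition fracR (x : R) : R := x - IZR (floorR x).

(* The circle T = R/Z is represented by [0,1); reduction mod 1 is fracR. *)
Definition Lam (m : R) : R := m / (1 - m).

(* h : T -> T, for y in [0,1). At y = 1 - m both branches agree mod 1. *)
Definition h (m : R) (y : R) : R :=
  fracR (if Rle_dec y (1 - m) then 1 - m + Lam m * y
         else / Lam m * (y - (1 - m))).

Definition g (m s : R) (x : R) : R := h m (fracR (x + s)).

(* For s in J_Gamma we have 1 - m <= s <= 1/2 <= m.  At s = 1 - m the point 0 is
   sent to the break point 1 - m of h, which h maps to 1 = 0 mod 1.  For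
   1 - m < s < m, the affine equation (x + s - (1 - m)) / Lam = x on the
   contracting branch of h has a solution x with x + s in (1 - m, 1). *)
From Stdlib Require Import Reals Lra Psatz.
Open Scope R_scope.

Lemma fracR_id (z : R) : 0 <= z < 1 -> fracR z = z.
Proof.
  intros Hz. unfold fracR, floorR.
  replace (up z) with 1%Z by (apply tech_up; simpl; lra).
  simpl. lra.
Qed.

Lemma fracR_1 : fracR 1 = 0.
Proof.
  unfold fracR, floorR.
  replace (up 1) with 2%Z by (apply tech_up; simpl; lra).
  simpl. lra.
Qed.

Lemma one_sub_le_J_left (m : R) : 1/2 <= m < 1 ->
  1 - m <= 1 / (-2 + 1 / (m - m^2)).
Proof.
  intros Hm.
  assert (Hp : 0 < m - m^2) by nra.
  assert (Hq : m - m^2 <= 1/4) by nra.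
  replace (1 / (-2 + 1 / (m - m^2))) with ((m - m^2) / (1 - 2 * (m - m^2)))
    by (field; lra).
  apply Rmult_le_reg_r with (1 - 2 * (m - m^2)); [lra|].
  unfold Rdiv. rewrite Rmult_assoc, Rinv_l by lra.
  assert (0 <= (1 - m) * (1 - m) * (2 * m - 1))
    by (apply Rmult_le_pos; [apply Rmult_le_pos|]; lra).
  nra.
Qed.

Lemma h_break_point (m : R) : 0 < m < 1 -> h m (1 - m) = 0.
Proof.
  intros Hm. unfold h.
  destruct (Rle_dec (1 - m) (1 - m)) as [_|]; [|lra].
  replace (1 - m + Lam m * (1 - m)) with 1 by (unfold Lam; field; lra).
  apply fracR_1.
Qed.

Lemma h_right_branch (m y : R) : 0 < m < 1 -> 1 - m < y < 1 ->
  h m y = (y - (1 - m)) / Lam m.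
Proof.
  intros Hm Hy. unfold h.
  destruct (Rle_dec y (1 - m)) as [|_]; [lra|].
  replace (/ Lam m * (y - (1 - m))) with ((y - (1 - m)) * (1 - m) / m)
    by (unfold Lam; field; lra).
  rewrite fracR_id; [unfold Lam; field; lra|].
  split.
  - apply Rmult_le_pos; [nra | apply Rlt_le, Rinv_0_lt_compat; lra].
  - apply Rmult_lt_reg_r with m; [lra|].
    unfold Rdiv. rewrite Rmult_assoc, Rinv_l by lra. nra.
Qed.

Lemma g_fixed_point_at_break (m : R) : 0 < m < 1 -> g m (1 - m) 0 = 0.
Proof.
  intros Hm. unfold g.
  rewrite Rplus_0_l, fracR_id by lra.
  exact (h_break_point m Hm).
Qed.

Lemma g_fixed_point_right (m s : R) : m < 1 -> 1 - m < s < m ->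
  exists x : R, 0 <= x < 1 /\ g m s x = x.
Proof.
  intros Hm1 Hs.
  assert (Hm : 1/2 < m) by lra.
  set (x := (s - (1 - m)) * (1 - m) / (2 * m - 1)).
  assert (Hx : x * (2 * m - 1) = (s - (1 - m)) * (1 - m))
    by (unfold x; field; lra).
  assert (Hx0 : 0 < x) by (unfold x; apply Rdiv_lt_0_compat; nra).
  assert (Hx1 : x < 1 - m) by nra.
  exists x. split; [lra|].
  unfold g. rewrite fracR_id by lra.
  rewrite h_right_branch by lra.
  unfold Lam. field_simplify_eq; nra.
Qed.

Theorem lemmaA2 (m s : R) (Hm1 : 1/2 <= m) (Hm2 : m < 1)
  (Hs1 : 1 / (-2 + 1 / (m - m^2)) <= s) (Hs2 : s <= 1/2) :
  exists x : R, 0 <= x < 1 /\ g m s x = x.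
Proof.
  assert (Hs : 1 - m <= s)
    by (eapply Rle_trans; [apply one_sub_le_J_left; lra | exact Hs1]).
  destruct (Req_dec s (1 - m)) as [-> | Hne].
  - exists 0. split; [lra|]. apply g_fixed_point_at_break. lra.
  - apply g_fixed_point_right; lra.
Qed.
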